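(* Let $((A, \cdot), N)$ be a Nijenhuis algebra. Then the infinitesimal $(\mu_1, N_1)$ of any formal deformation of the Nijenhuis algebra $((A, \cdot), N)$ is a $2$-cocycle in the cochain complex $\{ \oplus_{n \geq 0} C^n_{\mathrm{NAlg}} ((A, N)), \delta_{\mathrm{NAlg}} \}$. Moreover, the cohomology class of the corresponding $2$-cocycle depends only on the equivalence class of the formal deformation.
   Context: Work over a field $\mathbf{k}$ of characteristic $0$. A Nijenhuis algebra $((A,\cdot),N)$ is an associative algebra $(A,\cdot)$ with a linear map $N:A\to A$ satisfying $N(a)\cdot N(b) = N(N(a)\cdot b + a\cdot N(b) - N(a\cdot b))$ for all $a,b\in A$. Write $\mu(a,b)=a\cdot b$. Formal deformation: formal sums $\mu_t=\sum_{i\ge 0} t^i\mu_i \in \mathrm{Hom}(A^{\otimes 2},A)[[t]]$ with $\mu_0=\mu$ and $N_t=\sum_{i\ge0} t^i N_i\in \mathrm{Hom}(A,A)[[t]]$ with $N_0=N$ such that $(A[[t]],\mu_t)$ is an associative algebra over $\mathbf{k}[[t]]$ and the $\mathbf{k}[[t]]$-linear extension $N_t$ is a Nijenhuis operator on it. The pair $(\mu_1,N_1)$ is called its infinitesimal. Two formal deformations $((A[[t]],\mu_t),N_t)$ and $((A[[t]],\mu'_t),N'_t)$ are equivalent if there is a $\mathbf{k}[[t]]$-linear map $\varphi_t=\sum_{i\ge0}t^i\varphi_i$, $\varphi_i\in\mathrm{Hom}(A,A)$, $\varphi_0=\mathrm{Id}_A$, with $\varphi_t(\mu_t(a,b))=\mu'_t(\varphi_t(a),\varphi_t(b))$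 and $\varphi_t\circ N_t=N'_t\circ\varphi_t$. The cochain complex: $C^0_{\mathrm{NAlg}}((A,N))=0$, $C^1_{\mathrm{NAlg}}((A,N))=\mathrm{Hom}(A,A)$, and $C^n_{\mathrm{NAlg}}((A,N))=\mathrm{Hom}(A^{\otimes n},A)\oplus\mathrm{Hom}(A^{\otimes n-1},A)$ for $n\ge2$, with $\delta_{\mathrm{NAlg}}(f)=(\delta_{\mathrm{Hoch}}(f),-\partial^N(f))$ for $f\in C^1$ and $\delta_{\mathrm{NAlg}}(\chi,F)=(\delta_{\mathrm{Hoch}}(\chi),\, d_N(F)+(-1)^n\partial^N(\chi))$ for $(\chi,F)\in C^n$, $n\ge2$. Here, for $f\in\mathrm{Hom}(A^{\otimes n},A)$: - $\delta_{\mathrm{Hoch}}$ is the Hochschild coboundary: $(\delta_{\mathrm{Hoch}}f)(a_1,\dots,a_{n+1})=a_1\cdot f(a_2,\dots,a_{n+1})+\sum_{i=1}^n(-1)^i f(a_1,\dots,a_i\cdot a_{i+1},\dots,a_{n+1})+(-1)^{n+1}f(a_1,\dots,a_n)\cdot a_{n+1}$; - $(d_Nf)(a_1,\dots,a_{n+1})=N(a_1)\cdot f(a_2,\dots,a_{n+1})-(-1)^n f(a_1,\dots,a_n)\cdot N(a_{n+1})+\sum_{i=1}^n(-1)^i f(a_1,\dots,a_{i-1},N(a_i)\cdot a_{i+1}+a_i\cdot N(a_{i+1})-N(a_i\cdot a_{i+1}),\dots,a_{n+1}) - N\big((\delta_{\mathrm{Hoch}}f)(a_1,\dots,a_{n+1})\big)$;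 - $\partial^N(f)(a_1,\dots,a_n)=f(N(a_1),\dots,N(a_n))-\sum_{i}N\big(f(N(a_1),\dots,a_i,\dots,N(a_n))\big)+\sum_{i<j}N^2\big(f(N(a_1),\dots,a_i,\dots,a_j,\dots,N(a_n))\big)-\cdots+(-1)^nN^n(f(a_1,\dots,a_n))$ (the $k$-th sum runs over choices of $k$ arguments left without $N$, with $N^k$ applied outside and sign $(-1)^k$). $(\delta_{\mathrm{NAlg}})^2=0$; its cohomology is $H^\bullet_{\mathrm{NAlg}}((A,N))$. *)

From HB Require Import structures.
From mathcomp Require Import all_boot all_order all_algebra.
Set Implicit Arguments. Unset Strict Implicit. Unset Printing Implicit Defensive.
Import GRing.Theory.
Local Open Scope ring_scope.

Section NijenhuisDefs.
Variables (k : fieldType) (A : lmodType k).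

Definition is_lin (f : A -> A) : Prop :=
  forall (c : k) (x y : A), f (c *: x + y) = c *: f x + f y.

Definition is_bilin (m : A -> A -> A) : Prop :=
  (forall (c : k) (x y z : A), m (c *: x + y) z = c *: m x z + m y z) /\
  (forall (c : k) (x y z : A), m z (c *: x + y) = c *: m z x + m z y).

Definition nijenhuis_algebra (mu : A -> A -> A) (N : A -> A) : Prop :=
  [/\ is_bilin mu,
      (forall a b c, mu (mu a b) c = mu a (mu b c)),
      is_lin N &
      (forall a b, mu (N a) (N b) = N (mu (N a) b + mu a (N b) - N (mu a b)))].

(* Formal power series A[[t]] : coefficient sequences *)
Definition pser := nat -> A.

(* k[[t]]-linear extension of f_t = sum_i t^i f_i : (f_t x)_n = sum_{i+j=n} f_i (x_j) *)
Definition ser_map (fs : nat -> A -> A) (x : pser) : pser :=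
  fun n => \sum_(i < n.+1) fs i (x (n - i)%N).

(* k[[t]]-bilinear extension of mu_t = sum_i t^i mu_i *)
Definition ser_mul (ms : nat -> A -> A -> A) (x y : pser) : pser :=
  fun n => \sum_(i < n.+1) \sum_(j < (n - i).+1)
             ms i (x j) (y (n - i - j)%N).

Definition ser_add (x y : pser) : pser := fun n => x n + y n.
Definition ser_sub (x y : pser) : pser := fun n => x n - y n.

Definition formal_deformation (mu : A -> A -> A) (N : A -> A)
    (ms : nat -> A -> A -> A) (Ns : nat -> A -> A) : Prop :=
  [/\ (forall a b, ms 0%N a b = mu a b),
      (forall a, Ns 0%N a = N a),
      (forall i, is_bilin (ms i) /\ is_lin (Ns i)),
      (forall x y z : pser, forall n,
          ser_mul ms (ser_mul ms x y) z n = ser_mul ms x (ser_mul ms y z) n) &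
      (forall x y : pser, forall n,
          ser_mul ms (ser_map Ns x) (ser_map Ns y) n =
          ser_map Ns (ser_sub (ser_add (ser_mul ms (ser_map Ns x) y)
                                       (ser_mul ms x (ser_map Ns y)))
                              (ser_map Ns (ser_mul ms x y))) n)].

Definition equivalent_deformations
    (ms : nat -> A -> A -> A) (Ns : nat -> A -> A)
    (ms' : nat -> A -> A -> A) (Ns' : nat -> A -> A) : Prop :=
  exists phis : nat -> A -> A,
    [/\ (forall a, phis 0%N a = a),
        (forall i, is_lin (phis i)),
        (forall x y : pser, forall n,
            ser_map phis (ser_mul ms x y) n =
            ser_mul ms' (ser_map phis x) (ser_map phis y) n) &
        (forall x : pser, forall n,
            ser_map phis (ser_map Ns x) n = ser_map Ns' (ser_map phis x) n)].

Variables (mu : A -> A -> A) (N : A -> A).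

Definition hoch1 (f : A -> A) (a b : A) : A :=
  mu a (f b) - f (mu a b) + mu (f a) b.

Definition hoch2 (chi : A -> A -> A) (a b c : A) : A :=
  mu a (chi b c) - chi (mu a b) c + chi a (mu b c) - mu (chi a b) c.

Definition partN1 (f : A -> A) (a : A) : A := f (N a) - N (f a).

Definition partN2 (chi : A -> A -> A) (a b : A) : A :=
  chi (N a) (N b) - N (chi a (N b)) - N (chi (N a) b) + N (N (chi a b)).

Definition dN1 (F : A -> A) (a b : A) : A :=
  mu (N a) (F b) + mu (F a) (N b)
  - F (mu (N a) b + mu a (N b) - N (mu a b))
  - N (hoch1 F a b).

Definition deltaNAlg1_fst (f : A -> A) : A -> A -> A := hoch1 f.
Definition deltaNAlg1_snd (f : A -> A) : A -> A := fun a => - partN1 f a.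

(* delta_NAlg on C^2: (chi, F) |-> (d_Hoch chi, d_N F + (-1)^2 partial^N chi) *)
Definition deltaNAlg2_fst (chi : A -> A -> A) (F : A -> A) : A -> A -> A -> A :=
  hoch2 chi.
Definition deltaNAlg2_snd (chi : A -> A -> A) (F : A -> A) : A -> A -> A :=
  fun a b => dN1 F a b + partN2 chi a b.

Definition NAlg_2cocycle (chi : A -> A -> A) (F : A -> A) : Prop :=
  [/\ is_bilin chi, is_lin F,
      (forall a b c, deltaNAlg2_fst chi F a b c = 0) &
      (forall a b, deltaNAlg2_snd chi F a b = 0)].

(* two 2-cochains differ by a coboundary delta_NAlg f, f in C^1
   (C^0 = 0, so this is equality of cohomology classes in H^2) *)
Definition NAlg_cohomologous2 (chi : A -> A -> A) (F : A -> A)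
    (chi' : A -> A -> A) (F' : A -> A) : Prop :=
  exists f : A -> A,
    [/\ is_lin f,
        (forall a b, chi' a b - chi a b = deltaNAlg1_fst f a b) &
        (forall a, F' a - F a = deltaNAlg1_snd f a)].

End NijenhuisDefs.

From HB Require Import structures.
From mathcomp Require Import all_boot all_order all_algebra.
Set Implicit Arguments. Unset Strict Implicit. Unset Printing Implicit Defensive.
Import GRing.Theory.
Local Open Scope ring_scope.

(* Everything is read off the coefficient of t in the defining identities,
   evaluated on series concentrated in degree 0.  For a deformation, the
   t-coefficient of the associativity of mu_t is the Hochschild cocycle
   condition on mu_1, and that of the Nijenhuis identity of N_t is
   d_N N_1 + partial^N mu_1 = 0.  For an equivalence phi_t, the t-coefficients
   of phi_t mu_t = mu'_t (phi_t, phi_t) and phi_t N_t = N'_t phi_t say that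
   (mu'_1, N'_1) - (mu_1, N_1) = delta_NAlg (- phi_1).  Each comparison is an
   identity in the abelian group A once the maps are expanded by (bi)linearity. *)

(* Identities in an abelian group are decided by reifying both sides over a
   common list of atoms and comparing integer coefficients. *)
Inductive zterm := ZVar of nat | ZZero | ZAdd of zterm & zterm | ZOpp of zterm.

Section ZmodNormalization.
Variable V : zmodType.

Fixpoint zeval (env : seq V) (t : zterm) : V :=
  match t with
  | ZVar i => env`_i
  | ZZero => 0
  | ZAdd t1 t2 => zeval env t1 + zeval env t2
  | ZOpp t1 => - zeval env t1
  end.

Fixpoint zcoef (t : zterm) (i : nat) : int :=
  match t with
  | ZVar j => (i == j)%:Z
  | ZZero => 0
  | ZAdd t1 t2 => zcoef t1 i + zcoef t2 i
  | ZOpp t1 => - zcoef t1 i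
  end.

Fixpoint zsupp (t : zterm) : nat :=
  match t with
  | ZVar j => j.+1
  | ZZero => 0
  | ZAdd t1 t2 => maxn (zsupp t1) (zsupp t2)
  | ZOpp t1 => zsupp t1
  end.

Lemma zeval_coef env t n : (zsupp t <= n)%N ->
  zeval env t = \sum_(i < n) env`_i *~ zcoef t i.
Proof.
elim: t => [j||t1 IH1 t2 IH2|t1 IH1] /=.
- move=> lt_jn; rewrite (bigD1 (Ordinal lt_jn)) //= eqxx mulr1z big1 ?addr0 //.
  by move=> i; rewrite -val_eqE /= => /negbTE ->; rewrite mulr0z.
- by move=> _; rewrite big1 // => i _; rewrite mulr0z.
- rewrite geq_max => /andP[le1 le2]; rewrite IH1 // IH2 // -big_split /=.
  by apply: eq_bigr => i _; rewrite mulrzDr.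
- by move=> le1; rewrite IH1 // -sumrN; apply: eq_bigr => i _; rewrite mulrNz.
Qed.

Definition zcoef_eqb (t1 t2 : zterm) : bool :=
  all (fun i => zcoef t1 i == zcoef t2 i) (iota 0 (maxn (zsupp t1) (zsupp t2))).

Lemma zeval_eq env t1 t2 : zcoef_eqb t1 t2 -> zeval env t1 = zeval env t2.
Proof.
move=> /allP eq12; pose n := maxn (zsupp t1) (zsupp t2).
rewrite (@zeval_coef _ _ n) ?leq_maxl // (@zeval_coef _ _ n) ?leq_maxr //.
by apply: eq_bigr => i _; rewrite (eqP (eq12 i _)) // mem_iota /=.
Qed.

End ZmodNormalization.

Ltac zindex x env :=
  lazymatch env with
  | nil => constr:(@None nat)
  | (x :: _)%SEQ => constr:(Some 0%N)
  | (_ :: ?env')%SEQ =>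
      let r := zindex x env' in
      lazymatch r with Some ?n => constr:(Some n.+1) | None => r end
  end.

Ltac zsnoc env t :=
  lazymatch env with
  | nil => constr:([:: t])
  | (?x :: ?env')%SEQ => let r := zsnoc env' t in constr:((x :: r)%SEQ)
  end.

Ltac zreify env t :=
  lazymatch t with
  | (?t1 + ?t2)%R =>
      lazymatch zreify env t1 with (?e1, ?env1) =>
      lazymatch zreify env1 t2 with (?e2, ?env2) => constr:((ZAdd e1 e2, env2)) end end
  | (- ?t1)%R =>
      lazymatch zreify env t1 with (?e1, ?env1) => constr:((ZOpp e1, env1)) end
  | 0%R => constr:((ZZero, env))
  | _ =>
      lazymatch zindex t env with
      | Some ?n => constr:((ZVar n, env))
      | None => let n := eval compute in (size env) in
                  let env' := zsnoc env t in constr:((ZVar n, env'))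
      end
  end.

Ltac abel :=
  lazymatch goal with
  | |- ?l = ?r =>
      let T := type of l in
      lazymatch zreify (@nil T) l with (?el, ?env1) =>
      lazymatch zreify env1 r with (?er, ?env) =>
        change (zeval env el = zeval env er);
        apply: zeval_eq; vm_compute; reflexivity
      end end
  end.

(* Closes [x = y] using [E : l = r] when [x - y = +-(l - r)] is an identity
   of abelian groups. *)
Ltac abel_using E :=
  lazymatch type of E with
  | ?l = ?r =>
      lazymatch goal with
      | |- _ = ?y =>
          first [ transitivity (y + (l - r)); [abel | by rewrite E subrr addr0]
                | transitivity (y - (l - r)); [abel | by rewrite E subrr subr0] ]
      end
  end.

Section LinearMaps.
Variables (k : fieldType) (A : lmodType k).
Implicit Types (f : A -> A) (m : A -> A -> A).

Lemma is_linD f : is_lin f -> forall x y, f (x + y) = f x + f y.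
Proof. by move=> lin_f x y; have := lin_f 1 x y; rewrite !scale1r. Qed.

Lemma is_lin0 f : is_lin f -> f 0 = 0.
Proof.
by move=> lin_f; have := is_linD lin_f 0 0; rewrite addr0 -{1}[f 0]addr0 => /addrI.
Qed.

Lemma is_linN f : is_lin f -> forall x, f (- x) = - f x.
Proof.
by move=> lin_f x; rewrite -scaleN1r -[_ *: x]addr0 lin_f is_lin0 // addr0 scaleN1r.
Qed.

Lemma is_bilin0l m : is_bilin m -> forall z, m 0 z = 0.
Proof. by move=> [lin_m _] z; apply: (@is_lin0 (m^~ z)) => c x y; rewrite lin_m. Qed.

Lemma is_bilin0r m : is_bilin m -> forall z, m z 0 = 0.
Proof. by move=> [_ lin_m] z; apply: (@is_lin0 (m z)) => c x y; rewrite lin_m. Qed.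

Lemma is_bilinNl m : is_bilin m -> forall x z, m (- x) z = - m x z.
Proof. by move=> [lin_m _] x z; apply: (@is_linN (m^~ z)) => c y y'; rewrite lin_m. Qed.

Lemma is_bilinNr m : is_bilin m -> forall x z, m z (- x) = - m z x.
Proof. by move=> [_ lin_m] x z; apply: (@is_linN (m z)) => c y y'; rewrite lin_m. Qed.

Lemma hoch1N m f a b : is_bilin m ->
  hoch1 m (fun x => - f x) a b = - hoch1 m f a b.
Proof.
by move=> bilin_m; rewrite /hoch1 (is_bilinNl bilin_m) (is_bilinNr bilin_m) !opprD !opprK.
Qed.

Lemma partN1N N f a : is_lin N -> partN1 N (fun x => - f x) a = - partN1 N f a.
Proof. by move=> lin_N; rewrite /partN1 (is_linN lin_N) opprD opprK. Qed.

End LinearMaps.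

Section FirstOrderCoefficients.
Variables (k : fieldType) (A : lmodType k).
Implicit Types (ms : nat -> A -> A -> A) (fs : nat -> A -> A) (x y : pser A).

Definition ser_const (a : A) : pser A := fun n => if n is 0%N then a else 0.

Lemma ser_mul_coef0 ms x y : ser_mul ms x y 0%N = ms 0%N (x 0%N) (y 0%N).
Proof. by rewrite /ser_mul !big_ord_recl !big_ord0 /= !addr0. Qed.

Lemma ser_mul_coef1 ms x y : ser_mul ms x y 1%N =
  ms 0%N (x 0%N) (y 1%N) + ms 0%N (x 1%N) (y 0%N) + ms 1%N (x 0%N) (y 0%N).
Proof. by rewrite /ser_mul !big_ord_recl !big_ord0 /= !addr0. Qed.

Lemma ser_map_coef0 fs x : ser_map fs x 0%N = fs 0%N (x 0%N).
Proof. by rewrite /ser_map big_ord_recl big_ord0 addr0. Qed.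

Lemma ser_map_coef1 fs x : ser_map fs x 1%N = fs 0%N (x 1%N) + fs 1%N (x 0%N).
Proof. by rewrite /ser_map !big_ord_recl big_ord0 addr0. Qed.

End FirstOrderCoefficients.

Definition ser_coef01E := (ser_mul_coef1, ser_mul_coef0, ser_map_coef1, ser_map_coef0).

Section InfinitesimalOfDeformation.
Variables (k : fieldType) (A : lmodType k) (mu : A -> A -> A) (N : A -> A).
Variables (ms : nat -> A -> A -> A) (Ns : nat -> A -> A).
Hypotheses (ms_bilin : forall i, is_bilin (ms i)) (Ns_lin : forall i, is_lin (Ns i)).
Hypotheses (ms0E : ms 0%N =2 mu) (Ns0E : Ns 0%N =1 N).

Let ms_0l i z : ms i 0 z = 0. Proof. exact: is_bilin0l. Qed.
Let ms_0r i z : ms i z 0 = 0. Proof. exact: is_bilin0r. Qed.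
Let Ns_0 i : Ns i 0 = 0. Proof. exact: is_lin0. Qed.

Let N_lin : is_lin N.
Proof. by move=> c x y; rewrite -!Ns0E Ns_lin. Qed.

Lemma hoch2_infinitesimal :
  (forall x y z : pser A, forall n,
     ser_mul ms (ser_mul ms x y) z n = ser_mul ms x (ser_mul ms y z) n) ->
  forall a b c, hoch2 mu (ms 1%N) a b c = 0.
Proof.
move=> assoc a b c.
have := assoc (ser_const a) (ser_const b) (ser_const c) 1%N.
rewrite !ser_coef01E /= !ms_0l !ms_0r !ms0E !add0r !addr0 => E.
by rewrite /hoch2; abel_using E.
Qed.

Lemma deltaNAlg2_snd_infinitesimal :
  (forall x y : pser A, forall n,
     ser_mul ms (ser_map Ns x) (ser_map Ns y) n =
     ser_map Ns (ser_sub (ser_add (ser_mul ms (ser_map Ns x) y)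
                                  (ser_mul ms x (ser_map Ns y)))
                         (ser_map Ns (ser_mul ms x y))) n) ->
  forall a b, deltaNAlg2_snd mu N (ms 1%N) (Ns 1%N) a b = 0.
Proof.
move=> nij a b.
have := nij (ser_const a) (ser_const b) 1%N.
rewrite /ser_sub /ser_add !ser_coef01E /= !ms_0l !ms_0r !Ns_0 !ms0E !Ns0E !add0r !addr0.
rewrite !(is_linD N_lin, is_linN N_lin) => E.
rewrite /deltaNAlg2_snd /dN1 /partN2 /hoch1 !(is_linD N_lin, is_linN N_lin).
abel_using E.
Qed.

End InfinitesimalOfDeformation.

Section InfinitesimalOfEquivalence.
Variables (k : fieldType) (A : lmodType k) (mu : A -> A -> A) (N : A -> A).
Variables (ms ms' : nat -> A -> A -> A) (Ns Ns' : nat -> A -> A) (phis : nat -> A -> A).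
Hypotheses (ms_bilin : forall i, is_bilin (ms i)) (Ns_lin : forall i, is_lin (Ns i)).
Hypotheses (ms0E : ms 0%N =2 mu) (ms'0E : ms' 0%N =2 mu).
Hypotheses (Ns0E : Ns 0%N =1 N) (Ns'0E : Ns' 0%N =1 N).
Hypothesis phis0E : phis 0%N =1 id.

Let ms_0l i z : ms i 0 z = 0. Proof. exact: is_bilin0l. Qed.
Let ms_0r i z : ms i z 0 = 0. Proof. exact: is_bilin0r. Qed.
Let Ns_0 i : Ns i 0 = 0. Proof. exact: is_lin0. Qed.

Lemma hoch1_equiv_infinitesimal :
  (forall x y : pser A, forall n,
     ser_map phis (ser_mul ms x y) n = ser_mul ms' (ser_map phis x) (ser_map phis y) n) ->
  forall a b, ms' 1%N a b - ms 1%N a b = - hoch1 mu (phis 1%N) a b.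
Proof.
move=> phi_mul a b.
have := phi_mul (ser_const a) (ser_const b) 1%N.
rewrite !ser_coef01E /= !ms_0l !ms_0r !phis0E !ms0E !ms'0E !add0r => E.
by rewrite /hoch1; abel_using E.
Qed.

Lemma partN1_equiv_infinitesimal :
  (forall x : pser A, forall n,
     ser_map phis (ser_map Ns x) n = ser_map Ns' (ser_map phis x) n) ->
  forall a, Ns' 1%N a - Ns 1%N a = partN1 N (phis 1%N) a.
Proof.
move=> phi_N a.
have := phi_N (ser_const a) 1%N.
rewrite !ser_coef01E /= !Ns_0 !phis0E !Ns0E !Ns'0E !add0r => E.
by rewrite /partN1; abel_using E.
Qed.

End InfinitesimalOfEquivalence.

Theorem theorem4p1 (k : fieldType) (chark : [pchar k] =i pred0)
    (A : lmodType k) (mu : A -> A -> A) (N : A -> A)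
    (HNA : nijenhuis_algebra mu N) :
  (forall (ms : nat -> A -> A -> A) (Ns : nat -> A -> A),
      formal_deformation mu N ms Ns ->
      NAlg_2cocycle mu N (ms 1%N) (Ns 1%N)) /\
  (forall (ms : nat -> A -> A -> A) (Ns : nat -> A -> A)
          (ms' : nat -> A -> A -> A) (Ns' : nat -> A -> A),
      formal_deformation mu N ms Ns ->
      formal_deformation mu N ms' Ns' ->
      equivalent_deformations ms Ns ms' Ns' ->
      NAlg_cohomologous2 mu N (ms 1%N) (Ns 1%N) (ms' 1%N) (Ns' 1%N)).
Proof.
case: HNA => mu_bilin _ N_lin _; split.
- move=> ms Ns [ms0E Ns0E lin assoc nij].
  have ms_bilin i := (lin i).1; have Ns_lin i := (lin i).2.
  split; [exact: ms_bilin | exact: Ns_lin | |].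
  + exact: (hoch2_infinitesimal ms_bilin ms0E assoc).
  + exact: (deltaNAlg2_snd_infinitesimal ms_bilin Ns_lin ms0E Ns0E nij).
- move=> ms Ns ms' Ns' [ms0E Ns0E lin _ _] [ms'0E Ns'0E _ _ _].
  move=> [phis [phis0E phis_lin phi_mul phi_N]].
  have ms_bilin i := (lin i).1; have Ns_lin i := (lin i).2.
  exists (fun a => - phis 1%N a); split.
  + by move=> c x y; rewrite phis_lin opprD scalerN.
  + move=> a b; rewrite /deltaNAlg1_fst hoch1N //.
    exact: (hoch1_equiv_infinitesimal ms_bilin ms0E ms'0E phis0E phi_mul).
  + move=> a; rewrite /deltaNAlg1_snd partN1N // opprK.
    exact: (partN1_equiv_infinitesimal Ns_lin Ns0E Ns'0E phis0E phi_N).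
Qed.
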